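(* Let $(W,S)$ be a right-angled Coxeter system, $q>0$ and $p=(q-1)/\sqrt q$. For every $\mathbf{w}\in W$, $$T_{\mathbf{w}}=\sum_{(\mathbf{w}',\Gamma_0,\mathbf{w}'')\in A_{\mathbf{w}}} p^{\#V\Gamma_0}\, T^{(1)}_{\mathbf{w}'}\,P_{V\Gamma_0}\,T^{(1)}_{\mathbf{w}''}$$ as operators on $L^2(\mathcal{M}_q)$.
   Context: $(W,S)$: $S$ finite, $m(s,s)=1$, $m(s,t)=m(t,s)\in\{2,\infty\}$ for $s\neq t$, $W=\langle S\mid (st)^{m(s,t)}=1\rangle$; $|\mathbf{w}|$ word length. The Hecke algebra has linear basis $\{T_{\mathbf{w}}\}_{\mathbf{w}\in W}$, $T_e=1$, $T_sT_{\mathbf{w}}=T_{s\mathbf{w}}$ if $|s\mathbf{w}|>|\mathbf{w}|$ and $T_{s\mathbf{w}}+pT_{\mathbf{w}}$ otherwise, $T_{\mathbf{w}}^*=T_{\mathbf{w}^{-1}}$; $L^2(\mathcal{M}_q)$ is the GNS space of the trace $\tau(T_{\mathbf{w}})=\delta_{\mathbf{w},e}$ with cyclic vector $\Omega=T_e$ (so $\{T_{\mathbf{w}}\Omega\}$ is an orthonormal basis), and $T_{\mathbf{w}}$ acts by left multiplication. For $\mathbf{v}\in W$, $T^{(1)}_{\mathbf{v}}$ is the unitary on $L^2(\mathcal{M}_q)$ with $T^{(1)}_{\mathbf{v}}(T_{\mathbf{w}}\Omega)=T_{\mathbf{v}\mathbf{w}}\Omega$. For $\mathbf{u}\in W$,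 $P_{\mathbf{u}}$ is the orthogonal projection onto the closed span of $\{T_{\mathbf{v}}\Omega: |\mathbf{u}^{-1}\mathbf{v}|=|\mathbf{v}|-|\mathbf{u}|\}$. A clique is a (possibly empty) set $V\Gamma_0\subseteq S$ of pairwise distinct generators with $m(s,t)=2$ for all distinct $s,t\in V\Gamma_0$; $\#V\Gamma_0=|V\Gamma_0|$ is its number of elements, $V\Gamma_0$ also denotes the product in $W$ of its elements, and $P_{V\Gamma_0}$ is $P_{\mathbf{u}}$ for this product $\mathbf{u}$. $A_{\mathbf{w}}$ is the set of triples $(\mathbf{w}',\Gamma_0,\mathbf{w}'')$ with $\mathbf{w}',\mathbf{w}''\in W$ and $\Gamma_0$ a clique such that (1) $\mathbf{w}=\mathbf{w}'\,V\Gamma_0\,\mathbf{w}''$, (2) $|\mathbf{w}|=|\mathbf{w}'|+|V\Gamma_0|+|\mathbf{w}''|$, (3) every $s\in S$ that commutes with all elements of $V\Gamma_0$ satisfies $|\mathbf{w}'s|>|\mathbf{w}'|$. *)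

From HB Require Import structures.
From Stdlib Require Import Relation_Operators.
From mathcomp Require Import all_boot all_order all_algebra generic_quotient.
From mathcomp Require Import boolp reals.

Set Implicit Arguments.
Unset Strict Implicit.
Unset Printing Implicit Defensive.

Import Order.TTheory GRing.Theory Num.Theory.
Local Open Scope quotient_scope.

(** * Right-angled Coxeter group W = < S | s^2 = 1, (st)^2 = 1 if comm s t >
    [comm s t] means m(s,t) = 2 (for s <> t); otherwise m(s,t) = oo. *)
Section Coxeter.
Variables (S : finType) (comm : rel S).

Inductive wstep : seq S -> seq S -> Prop :=
| wstep_cancel (u v : seq S) (s : S) : wstep (u ++ s :: s :: v) (u ++ v)
| wstep_comm (u v : seq S) (s t : S) :
    comm s t -> wstep (u ++ s :: t :: v) (u ++ t :: s :: v).

Definition weq (u v : seq S) : Prop := clos_refl_sym_trans _ wstep u v.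
Definition weqb (u v : seq S) : bool := `[< weq u v >].

Lemma weqb_refl : reflexive weqb.
Proof. by move=> u; apply/asboolP; apply: rst_refl. Qed.
Lemma weqb_sym : symmetric weqb.
Proof.
by move=> u v; apply/asboolP/asboolP => h; apply: rst_sym.
Qed.
Lemma weqb_trans : transitive weqb.
Proof.
by move=> v u w /asboolP h1 /asboolP h2; apply/asboolP; apply: rst_trans h2.
Qed.

Definition weq_rel := EquivRel weqb weqb_refl weqb_sym weqb_trans.

Definition W := {eq_quot weq_rel}.
HB.instance Definition _ := Choice.on W.
HB.instance Definition _ := Quotient.on W.

Definition wpi (u : seq S) : W := \pi_W u.
Definition wmul (x y : W) : W := wpi (repr x ++ repr y).
Definition winv (x : W) : W := wpi (rev (repr x)).
Definition wgen (s : S) : W := wpi [:: s].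

Lemma wlen_ex (x : W) : exists n, [exists t : n.-tuple S, wpi t == x].
Proof.
exists (size (repr x)); apply/existsP; exists (in_tuple (repr x)).
by rewrite /wpi reprK.
Qed.
Definition wlen (x : W) : nat := ex_minn (wlen_ex x).

Lemma redword_ex (x : W) :
  exists u : seq S, (wpi u == x) && (size u == wlen x).
Proof.
rewrite /wlen; case: ex_minnP => n /existsP [t /eqP <-] _.
by exists (tval t); rewrite eqxx size_tuple eqxx.
Qed.
Definition redword (x : W) : seq S := xchoose (redword_ex x).

Definition clique (G : {set S}) : Prop :=
  forall s t, s \in G -> t \in G -> s != t -> comm s t.
Definition VG (G : {set S}) : W := wpi (enum G).

Definition wball (n : nat) : seq W :=
  undup (flatten [seq [seq wpi (tval t) | t <- enum {: k.-tuple S}]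
                 | k <- iota 0 n.+1]).

Definition inA (w w1 : W) (G : {set S}) (w2 : W) : Prop :=
  [/\ clique G,
      w = wmul w1 (wmul (VG G) w2),
      wlen w = (wlen w1 + wlen (VG G) + wlen w2)%N &
      forall s : S, (forall t, t \in G -> wmul (wgen s) (wgen t) = wmul (wgen t) (wgen s)) ->
        (wlen w1 < wlen (wmul w1 (wgen s)))%N].

(** Operators on vectors.  A vector sum_x f(x) T_x Omega of L^2(M_q) is
    encoded by its coefficient function f : W -> R. *)
Section Ops.
Variables (R : realType).

Local Open Scope ring_scope.
Definition vec := W -> R.

(* left multiplication by T_s:  T_s T_x = T_{sx} if |sx| > |x|,
   T_{sx} + p T_x otherwise *)
Definition Ts (p : R) (s : S) (f : vec) : vec :=
  fun y => f (wmul (wgen s) y) +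
           (if (wlen (wmul (wgen s) y) < wlen y)%N then p * f y else 0).

Definition Tw (p : R) (w : W) (f : vec) : vec :=
  foldr (fun s g => Ts p s \o g) id (redword w) f.

(* T^(1)_v : T_x Omega |-> T_{vx} Omega *)
Definition T1 (v : W) (f : vec) : vec := fun y => f (wmul (winv v) y).

Definition Pu (u : W) (f : vec) : vec :=
  fun v => if (wlen (wmul (winv u) v) + wlen u == wlen v)%N then f v else 0.

End Ops.
End Coxeter.

(* Induction along a reduced word for w.  If |s w0| = |w0| + 1 then
   T_(s w0) = T_s T_w0, and on coefficient functions
   T_s g y = g (s y) + p [|s y| < |y|] g y.
   The triples (w1, G, w2) of A_(s w0) fall into three classes: s is a left
   descent of w1, s lies in G, or neither.  The first class is the image, under
   w1 |-> s w1, of the triples of A_w0 for which s fails to commute with w1 or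
   with some element of G; for these only the first summand of T_s survives.
   The other two classes are the images of the remaining triples of A_w0 under
   G |-> G + s and w2 |-> s w2; they receive the second and the first summand of
   T_s respectively, because P_(V G) is the indicator that every element of G
   is a left descent.
   Word length is computed through Tits' normal form: letters are pushed one at
   a time onto a word, cancelling against an equal letter that can be commuted
   to its front.  Words equal in W have normal forms equal up to commuting
   letters, and normal forms are reduced. *)

From Pilot Require Import Defs.
From HB Require Import structures.
From Stdlib Require Import Relation_Operators.
From mathcomp Require Import all_boot all_order all_algebra generic_quotient.
From mathcomp Require Import boolp reals zify.
Import Order.TTheory GRing.Theory Num.Theory.

Set Implicit Arguments.
Unset Strict Implicit.
Unset Printing Implicit Defensive.

Section EquivalenceClosure.
Variables (T U : Type) (r : T -> T -> Prop).

Lemma rst_morph (E : U -> U -> Prop) (g : T -> U) :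
  (forall x, E x x) -> (forall x y, E x y -> E y x) ->
  (forall x y z, E x y -> E y z -> E x z) ->
  (forall x y, r x y -> E (g x) (g y)) ->
  forall x y, clos_refl_sym_trans T r x y -> E (g x) (g y).
Proof. by move=> Erefl Esym Etrans Er x y; elim=> *; eauto. Qed.

Lemma rst_lift (e : U -> U -> Prop) (g : T -> U) :
  (forall x y, r x y -> clos_refl_sym_trans U e (g x) (g y)) ->
  forall x y, clos_refl_sym_trans T r x y -> clos_refl_sym_trans U e (g x) (g y).
Proof. by apply: rst_morph => *; [apply: rst_refl|apply: rst_sym|apply: rst_trans]; eauto. Qed.

End EquivalenceClosure.

Lemma big_seq_bij (V : nmodType) (T1 T2 : eqType) (l1 : seq T1) (l2 : seq T2)
    (P1 : pred T1) (P2 : pred T2) (phi : T1 -> T2) (psi : T2 -> T1) (F : T2 -> V) :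
  uniq l1 -> uniq l2 ->
  (forall x, x \in l1 -> P1 x -> [/\ phi x \in l2, P2 (phi x) & psi (phi x) = x]) ->
  (forall y, y \in l2 -> P2 y -> [/\ psi y \in l1, P1 (psi y) & phi (psi y) = y]) ->
  (\sum_(x <- l1 | P1 x) F (phi x) = \sum_(y <- l2 | P2 y) F y)%R.
Proof.
move=> u1 u2 h1 h2.
rewrite -big_filter -[RHS]big_filter -(big_map phi xpredT F).
apply: perm_big; apply: uniq_perm; rewrite ?filter_uniq //.
- rewrite map_inj_in_uniq ?filter_uniq // => a b.
  rewrite !mem_filter => /andP [pa la] /andP [pb lb] Eab.
  by have [_ _ <-] := h1 a la pa; have [_ _ <-] := h1 b lb pb; rewrite Eab.
move=> y; apply/mapP/idP.
  case=> x; rewrite mem_filter => /andP [px lx] ->.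
  by have [a b _] := h1 x lx px; rewrite mem_filter b a.
rewrite mem_filter => /andP [py ly]; have [a b c] := h2 y ly py.
by exists (psi y); rewrite ?mem_filter ?b ?a ?c.
Qed.

Section Words.
Variables (S : finType) (comm : rel S) (comm_sym : symmetric comm).

Local Notation wstep := (@wstep S comm).
Local Notation weq := (@weq S comm).

Lemma wstep_catl w u v : wstep u v -> wstep (w ++ u) (w ++ v).
Proof. by case=> [x y s|x y s t h]; rewrite !catA; constructor. Qed.

Lemma wstep_catr w u v : wstep u v -> wstep (u ++ w) (v ++ w).
Proof. by case=> [x y s|x y s t h]; rewrite -!catA /=; constructor. Qed.

Lemma wstep_rev u v : wstep u v -> weq (rev u) (rev v).
Proof.
have rev2 (x y : seq S) a b : rev (x ++ a :: b :: y) = rev y ++ b :: a :: rev x.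
  by rewrite rev_cat !rev_cons -!cats1 -!catA.
case=> [x y s|x y s t h]; apply: rst_step.
  by rewrite rev2 rev_cat; apply: wstep_cancel.
by rewrite !rev2; apply: wstep_comm; rewrite comm_sym.
Qed.

Lemma weq_catl w u v : weq u v -> weq (w ++ u) (w ++ v).
Proof. by apply: rst_lift => x y h; apply/rst_step/wstep_catl. Qed.

Lemma weq_catr w u v : weq u v -> weq (u ++ w) (v ++ w).
Proof. by apply: (rst_lift (g := cat^~ w)) => x y h; apply/rst_step/wstep_catr. Qed.

Lemma weq_cat u u' v v' : weq u u' -> weq v v' -> weq (u ++ v) (u' ++ v').
Proof. by move=> h1 h2; apply: rst_trans (weq_catr _ h1) (weq_catl _ h2). Qed.

Lemma weq_rev u v : weq u v -> weq (rev u) (rev v).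
Proof. by apply: rst_lift => x y; apply: wstep_rev. Qed.

Lemma weq_sq s : weq [:: s; s] [::].
Proof. by apply: rst_step; apply: (@wstep_cancel _ _ [::] [::]). Qed.

Lemma weq_cat_rev u : weq (u ++ rev u) [::].
Proof.
elim: u => [|x u IH]; first exact: rst_refl.
have -> : (x :: u) ++ rev (x :: u) = [:: x] ++ (u ++ rev u) ++ [:: x].
  by rewrite rev_cons -cats1 /= -catA.
apply: rst_trans (weq_cat (rst_refl _ _ [:: x]) (weq_catr [:: x] IH)) _.
exact: weq_sq.
Qed.

Inductive cswap : seq S -> seq S -> Prop :=
  cswap_c a b s t : comm s t -> cswap (a ++ s :: t :: b) (a ++ t :: s :: b).

Definition ceq := clos_refl_sym_trans _ cswap.

Lemma ceq_swap a b s t : comm s t -> ceq (a ++ s :: t :: b) (a ++ t :: s :: b).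
Proof. by move=> h; apply: rst_step; constructor. Qed.

Lemma ceq_catl w u v : ceq u v -> ceq (w ++ u) (w ++ v).
Proof. by apply: rst_lift => _ _ [a b s t h]; rewrite !catA; apply: ceq_swap. Qed.

Lemma ceq_cons x u v : ceq u v -> ceq (x :: u) (x :: v).
Proof. exact: (ceq_catl [:: x]). Qed.

Lemma ceq_perm u v : ceq u v -> perm_eq u v.
Proof.
apply: (rst_morph (E := fun a b => perm_eq a b) (g := id)) => //.
- by move=> x y; rewrite perm_sym.
- by move=> x y z; apply: perm_trans.
move=> _ _ [a b s t _]; rewrite perm_cat2l.
by rewrite -[s :: t :: b]/([:: s; t] ++ b) -[t :: s :: b]/([:: t; s] ++ b)
  perm_cat2r (perm_catC [:: s] [:: t]).
Qed.

Lemma ceq_size u v : ceq u v -> size u = size v.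
Proof. by move/ceq_perm/perm_size. Qed.

Lemma ceq_weq u v : ceq u v -> weq u v.
Proof. by apply: (rst_lift (g := id)) => _ _ [a b s t h]; apply/rst_step/wstep_comm. Qed.

(** * Normal forms *)

Definition passes s x := (x != s) && comm x s.

Fixpoint extract s (r : seq S) : option (seq S) :=
  match r with
  | [::] => None
  | x :: r' => if x == s then Some r'
               else if comm x s then omap (cons x) (extract s r') else None
  end.

Definition push s r := if extract s r is Some r' then r' else s :: r.

Definition nf (u : seq S) := foldr push [::] u.

Fixpoint reduced (r : seq S) :=
  if r is x :: r' then (extract x r' == None) && reduced r' else true.

Lemma extract_cat s a b : extract s (a ++ b) =
  if all (passes s) a then omap (cat a) (extract s b)
  else omap (cat^~ b) (extract s a).
Proof.
elim: a => [|x a IH] /=; first by case: (extract s b).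
rewrite /passes; case: eqP => [->|nxs] //=.
case: (comm x s) => //=; rewrite IH.
by case: (all _ a); case: (extract s _).
Qed.

Lemma extractP s r r' : extract s r = Some r' <->
  exists a b, [/\ r = a ++ s :: b, r' = a ++ b & all (passes s) a].
Proof.
split; last by case=> a [b [-> -> h]]; rewrite extract_cat h /= eqxx.
elim: r r' => [|x r IH] r' //=.
case: eqP => [-> [<-]|/eqP nxs]; first by exists [::], r.
case: ifP => // cx; case E: (extract s r) => [c|] //= [<-].
have [a [b [-> -> h]]] := IH _ E.
by exists (x :: a), b; rewrite /= /passes nxs cx h.
Qed.

Lemma extract_size s r r' : extract s r = Some r' -> size r = (size r').+1.
Proof. by case/extractP=> a [b [-> -> _]]; rewrite !size_cat /= addnS. Qed.

Lemma extract_mem s r r' : extract s r = Some r' -> s \in r.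
Proof. by case/extractP=> a [b [-> _ _]]; rewrite mem_cat inE eqxx orbT. Qed.

Lemma ceq_passes s a b : all (passes s) a -> ceq (a ++ s :: b) (s :: a ++ b).
Proof.
elim: a => [|x a IH] /=; first by move=> _; apply: rst_refl.
case/andP=> /andP [_ cxs] h.
exact: rst_trans (ceq_cons x (IH h)) (@ceq_swap [::] _ _ _ cxs).
Qed.

Lemma extract_ceq_cons s r r' : extract s r = Some r' -> ceq r (s :: r').
Proof. by case/extractP=> a [b [-> -> h]]; apply: ceq_passes. Qed.

Definition oceq (o1 o2 : option (seq S)) :=
  match o1, o2 with
  | None, None => True
  | Some a, Some b => ceq a b
  | _, _ => False
  end.

Lemma extract_swap2 s x y b : comm x y ->
  oceq (extract s (x :: y :: b)) (extract s (y :: x :: b)).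
Proof.
move=> cxy /=; have cyx : comm y x by rewrite comm_sym.
case: (eqVneq x s) => [<-|nxs].
  by case: (eqVneq y x) => [->|nyx] /=; rewrite ?cyx /=; apply: rst_refl.
case: (eqVneq y s) => [<-|nys]; first by rewrite cxy /=; apply: rst_refl.
case: (comm x s); case: (comm y s) => //=; case: (extract s b) => //= c.
exact: (@ceq_swap [::]).
Qed.

Lemma extract_ceq s u v : ceq u v -> oceq (extract s u) (extract s v).
Proof.
apply: (rst_morph (E := oceq)).
- by case=> //= a; apply: rst_refl.
- by case=> [a|] [b|] //=; apply: rst_sym.
- by case=> [a|] [b|] [c|] //=; apply: rst_trans.
move=> _ _ [a b x y cxy]; rewrite !extract_cat.
case: (all (passes s) a); last by case: (extract s a) => //= c; apply: ceq_swap.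
have := extract_swap2 s b cxy.
by case: (extract s (x :: _)); case: (extract s (y :: _)) => //= c d; apply: ceq_catl.
Qed.

Lemma extract_none_ceq s u v : ceq u v -> (extract s u == None) = (extract s v == None).
Proof. by move/(extract_ceq s); case: (extract s u); case: (extract s v). Qed.

Lemma push_ceq s u v : ceq u v -> ceq (push s u) (push s v).
Proof.
move=> h; rewrite /push; have := extract_ceq s h.
by case: (extract s u); case: (extract s v) => //= _; apply: ceq_cons.
Qed.

Lemma foldr_push_ceq x u v : ceq u v -> ceq (foldr push u x) (foldr push v x).
Proof. by elim: x => [|a x IH] //= h; apply/push_ceq/IH. Qed.

Lemma reduced_ceq u v : ceq u v -> reduced u = reduced v.
Proof.
apply: (rst_morph (E := fun a b => a = b)) => [//|x y //|x y z -> //|].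
move=> _ _ [a b x y cxy]; elim: a => [|c a IH] /=; last first.
  by rewrite IH (extract_none_ceq c (ceq_swap a b cxy)).
case: (eqVneq x y) => [->//|_].
have cyx : comm y x by rewrite comm_sym.
by rewrite cyx cxy; case: (extract x b); case: (extract y b).
Qed.

Lemma reduced_extract s r r' : reduced r -> extract s r = Some r' ->
  extract s r' = None /\ reduced r'.
Proof.
move=> hr /extract_ceq_cons h; rewrite (reduced_ceq h) /= in hr.
by case/andP: hr => /eqP.
Qed.

Lemma reduced_push s r : reduced r -> reduced (push s r).
Proof.
rewrite /push; case E: (extract s r) => [r'|] hr; first by case: (reduced_extract hr E).
by rewrite /= E.
Qed.

Lemma reduced_nf u : reduced (nf u).
Proof. by elim: u => [|x u IH] //=; apply: reduced_push. Qed.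

Lemma push_pushK s r : reduced r -> ceq (push s (push s r)) r.
Proof.
rewrite /push; case E: (extract s r) => [r'|] hr.
  by case: (reduced_extract hr E) => -> _; apply/rst_sym/extract_ceq_cons.
by rewrite /= eqxx; apply: rst_refl.
Qed.

Lemma push_comm_extract s t r : comm s t -> s != t -> extract s r = None ->
  extract t r <> None -> push s (push t r) = push t (push s r).
Proof.
move=> cst nst Es; case Et: (extract t r) => [rt|] // _.
rewrite /push Et Es /= (negbTE nst) cst.
move: (Et) => /extractP [a [b [Er Ert ha]]]; subst r rt.
suff -> : extract s (a ++ b) = None by rewrite Et.
move: Es; rewrite !extract_cat /= eq_sym (negbTE nst) comm_sym cst.
by case: (all (passes s) a); [case: (extract s b) | case: (extract s a)].
Qed.

Lemma push_comm s t r : comm s t -> reduced r ->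
  ceq (push s (push t r)) (push t (push s r)).
Proof.
move=> cst hr; case: (eqVneq s t) => [->|nst]; first exact: rst_refl.
have cts : comm t s by rewrite comm_sym.
have nts : t != s by rewrite eq_sym.
case Es: (extract s r) => [rs|]; case Et: (extract t r) => [rt|].
- rewrite /push Es Et.
  move: (Et) => /extractP [a [b [Er Ert ha]]]; subst r rt.
  move: Es; rewrite extract_cat /= (negbTE nts) cts.
  case hs: (all (passes s) a).
    case Eb: (extract s b) => [b'|] //= [<-].
    by rewrite extract_cat hs Eb /= extract_cat ha /= eqxx; apply: rst_refl.
  case Ea: (extract s a) => [a'|] //= [<-].
  rewrite extract_cat hs Ea /= extract_cat.
  move: Ea => /extractP [a1 [a2 [Ea Ea' _]]]; subst a a'.
  move: ha; rewrite !all_cat /= => /and3P [-> _ ->].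
  by rewrite /= eqxx; apply: rst_refl.
- by rewrite (@push_comm_extract t s r) ?Es //; apply: rst_refl.
- by rewrite (@push_comm_extract s t r) ?Et //; apply: rst_refl.
- rewrite /push Es Et /= (negbTE nst) (negbTE nts) cst cts Es Et.
  exact: (@ceq_swap [::]).
Qed.

Lemma nf_cat u v : nf (u ++ v) = foldr push (nf v) u.
Proof. by rewrite /nf foldr_cat. Qed.

Lemma nf_weq u v : weq u v -> ceq (nf u) (nf v).
Proof.
apply: rst_lift => _ _ [x y s|x y s t h]; rewrite !nf_cat /=; apply: foldr_push_ceq.
  exact/push_pushK/reduced_nf.
exact/push_comm/reduced_nf.
Qed.

Lemma weq_push s r : weq (s :: r) (push s r).
Proof.
rewrite /push; case E: (extract s r) => [r'|]; last exact: rst_refl.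
apply: rst_trans (weq_catl [:: s] (ceq_weq (extract_ceq_cons E))) _.
exact: (weq_catr r' (weq_sq s)).
Qed.

Lemma weq_nf u : weq u (nf u).
Proof.
elim: u => [|x u IH] /=; first exact: rst_refl.
exact: rst_trans (weq_catl [:: x] IH) (weq_push _ _).
Qed.

Lemma size_push s r :
  size (push s r) = if extract s r is Some _ then (size r).-1 else (size r).+1.
Proof. by rewrite /push; case E: (extract s r) => [r'|] //; rewrite (extract_size E). Qed.

Lemma size_nf u : size (nf u) <= size u.
Proof.
elim: u => [|x u IH] //=; rewrite size_push.
by case: (extract _ _) => [_|] //; apply: leq_trans (leq_pred _) (leqW IH).
Qed.

Lemma nf_reduced r : reduced r -> nf r = r.
Proof. by elim: r => [|x r IH] //= /andP [/eqP E /IH ->]; rewrite /push E. Qed.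

Lemma reduced_size_nf u : size (nf u) = size u -> reduced u.
Proof.
elim: u => [|x u IH] //=; rewrite size_push.
case E: (extract x (nf u)) => [r'|] h.
  by have := leq_trans (leq_pred _) (size_nf u); rewrite h ltnn.
move: h => [/IH hu]; rewrite hu andbT.
by rewrite (nf_reduced hu) in E; rewrite E.
Qed.

(** * Word length *)

Local Notation W := (@Defs.W S comm).
Local Notation wpi := (@Defs.wpi S comm).
Local Notation wmul := (@Defs.wmul S comm).
Local Notation winv := (@Defs.winv S comm).
Local Notation wgen := (@Defs.wgen S comm).
Local Notation wlen := (@Defs.wlen S comm).

Lemma wpiP u v : wpi u = wpi v <-> weq u v.
Proof. by split=> [/(@eqquotP _ _ W)/asboolP|h]; last apply/(@eqquotP _ _ W)/asboolP. Qed.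

Lemma wpi_repr (x : W) : wpi (repr x) = x.
Proof. exact: reprK. Qed.

Lemma wpi_surj (x : W) : exists u, x = wpi u.
Proof. by exists (repr x); rewrite wpi_repr. Qed.

Lemma wmulE u v : wmul (wpi u) (wpi v) = wpi (u ++ v).
Proof. by apply/wpiP/weq_cat; apply/wpiP; rewrite wpi_repr. Qed.

Lemma winvE u : winv (wpi u) = wpi (rev u).
Proof. by apply/wpiP/weq_rev/wpiP; rewrite wpi_repr. Qed.

Definition wone : W := wpi [::].

Lemma wmulA (x y z : W) : wmul x (wmul y z) = wmul (wmul x y) z.
Proof.
case: (wpi_surj x) => a ->; case: (wpi_surj y) => b ->; case: (wpi_surj z) => c ->.
by rewrite !wmulE catA.
Qed.

Lemma wmul1w (x : W) : wmul wone x = x.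
Proof. by case: (wpi_surj x) => a ->; rewrite wmulE. Qed.

Lemma wmulw1 (x : W) : wmul x wone = x.
Proof. by case: (wpi_surj x) => a ->; rewrite wmulE cats0. Qed.

Lemma wmulwV (x : W) : wmul x (winv x) = wone.
Proof. by case: (wpi_surj x) => a ->; rewrite winvE wmulE; apply/wpiP/weq_cat_rev. Qed.

Lemma winvK (x : W) : winv (winv x) = x.
Proof. by case: (wpi_surj x) => a ->; rewrite !winvE revK. Qed.

Lemma winvM (x y : W) : winv (wmul x y) = wmul (winv y) (winv x).
Proof.
case: (wpi_surj x) => a ->; case: (wpi_surj y) => b ->.
by rewrite wmulE !winvE wmulE rev_cat.
Qed.

Lemma winv_gen s : winv (wgen s) = wgen s.
Proof. by rewrite /Defs.wgen winvE. Qed.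

Lemma wgen_sq s : wmul (wgen s) (wgen s) = wone.
Proof. by rewrite /Defs.wgen wmulE; apply/wpiP/weq_sq. Qed.

Lemma wgenK s x : wmul (wgen s) (wmul (wgen s) x) = x.
Proof. by rewrite wmulA wgen_sq wmul1w. Qed.

Lemma wmulKV (x y : W) : wmul x (wmul (winv x) y) = y.
Proof. by rewrite wmulA wmulwV wmul1w. Qed.

Lemma wlen_nf u : wlen (wpi u) = size (nf u).
Proof.
rewrite /Defs.wlen; case: ex_minnP => n /existsP [t /eqP Ht] Hmin.
apply/eqP; rewrite eqn_leq; apply/andP; split.
  apply: Hmin; apply/existsP; exists (in_tuple (nf u)).
  exact/eqP/wpiP/rst_sym/weq_nf.
have /ceq_size <- : ceq (nf t) (nf u) by apply/nf_weq/wpiP.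
by apply: leq_trans (size_nf _) _; rewrite size_tuple.
Qed.

Lemma wlen_reduced r : reduced r -> wlen (wpi r) = size r.
Proof. by move=> h; rewrite wlen_nf nf_reduced. Qed.

Lemma wlen_le_size u : wlen (wpi u) <= size u.
Proof. by rewrite wlen_nf size_nf. Qed.

Definition nfw (x : W) := nf (repr x).

Lemma nfw_reduced x : reduced (nfw x).
Proof. exact: reduced_nf. Qed.

Lemma wpi_nfw x : wpi (nfw x) = x.
Proof. by rewrite -[RHS]wpi_repr; apply/wpiP/rst_sym/weq_nf. Qed.

Lemma size_nfw x : size (nfw x) = wlen x.
Proof. by rewrite -{2}(wpi_nfw x) wlen_reduced // nfw_reduced. Qed.

Lemma wlen_mul_le x y : wlen (wmul x y) <= wlen x + wlen y.
Proof.
rewrite -{1}(wpi_nfw x) -{1}(wpi_nfw y) wmulE.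
by apply: leq_trans (wlen_le_size _) _; rewrite size_cat !size_nfw.
Qed.

Lemma wlen_inv x : wlen (winv x) = wlen x.
Proof.
have le_inv y : wlen (winv y) <= wlen y.
  rewrite -{1}(wpi_nfw y) winvE.
  by apply: leq_trans (wlen_le_size _) _; rewrite size_rev size_nfw.
by apply/eqP; rewrite eqn_leq le_inv /=; have := le_inv (winv x); rewrite winvK.
Qed.

Lemma wlen_eq0 x : wlen x = 0 -> x = wone.
Proof. by rewrite -size_nfw -{2}(wpi_nfw x); case: (nfw x). Qed.

Lemma wlen_one : wlen wone = 0.
Proof. by rewrite wlen_reduced. Qed.

Lemma wlen_gen s : wlen (wgen s) = 1.
Proof. by rewrite wlen_reduced. Qed.

(** * Descents *)

Definition ldesc s x := wlen (wmul (wgen s) x) < wlen x.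
Definition rdesc s x := wlen (wmul x (wgen s)) < wlen x.

Lemma wlen_lmul_reduced s r : reduced r ->
  wlen (wmul (wgen s) (wpi r)) = if extract s r then (size r).-1 else (size r).+1.
Proof.
move=> hr; rewrite /Defs.wgen wmulE wlen_nf /= nf_reduced // size_push.
by case: (extract s r).
Qed.

Lemma ldesc_reduced s r : reduced r -> ldesc s (wpi r) = (extract s r != None).
Proof.
move=> hr; rewrite /ldesc wlen_lmul_reduced // wlen_reduced //.
case E: (extract s r) => [r'|] /=; last by rewrite ltnNge leqnSn.
by rewrite (extract_size E) /= ltnSn.
Qed.

Lemma wlen_ldesc s x : ldesc s x -> wlen x = (wlen (wmul (wgen s) x)).+1.
Proof.
rewrite -(wpi_nfw x); move: (nfw x) (nfw_reduced x) => r hr.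
rewrite ldesc_reduced // wlen_lmul_reduced // wlen_reduced //.
by case E: (extract s r) => [r'|] //= _; rewrite (extract_size E).
Qed.

Lemma wlen_nldesc s x : ~~ ldesc s x -> wlen (wmul (wgen s) x) = (wlen x).+1.
Proof.
rewrite -(wpi_nfw x); move: (nfw x) (nfw_reduced x) => r hr.
by rewrite ldesc_reduced // wlen_lmul_reduced // wlen_reduced //; case: (extract s r).
Qed.

Lemma rdesc_inv s x : rdesc s x = ldesc s (winv x).
Proof. by rewrite /rdesc /ldesc -wlen_inv winvM winv_gen wlen_inv. Qed.

Lemma wlen_rdesc s x : rdesc s x -> wlen x = (wlen (wmul x (wgen s))).+1.
Proof.
rewrite rdesc_inv => /wlen_ldesc; rewrite wlen_inv => ->.
by rewrite -wlen_inv winvM winv_gen winvK.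
Qed.

Lemma wlen_nrdesc s x : ~~ rdesc s x -> wlen (wmul x (wgen s)) = (wlen x).+1.
Proof.
rewrite rdesc_inv => /wlen_nldesc; rewrite wlen_inv => <-.
by rewrite -wlen_inv winvM winv_gen.
Qed.

Lemma wlen_nrdesc_lt s x : ~~ rdesc s x -> wlen x < wlen (wmul x (wgen s)).
Proof. by move/wlen_nrdesc => ->. Qed.

Definition gcomm a b := wmul (wgen a) (wgen b) = wmul (wgen b) (wgen a).

Lemma gcomm_sym a b : gcomm a b -> gcomm b a.
Proof. by rewrite /gcomm => ->. Qed.

Lemma comm_gcomm a b : comm a b -> gcomm a b.
Proof.
move=> h; rewrite /gcomm /Defs.wgen !wmulE; apply/wpiP/rst_step.
exact: (@wstep_comm _ _ [::] [::]).
Qed.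

Lemma ceq_noncomm_pair a b u : ~~ comm a b -> ceq [:: a; b] u -> u = [:: a; b].
Proof.
move=> nab; have nba : ~~ comm b a by rewrite comm_sym.
suff H : forall u v, ceq u v -> u = [:: a; b] <-> v = [:: a; b].
  by move=> /H [/(_ erefl)].
apply: (rst_morph (E := fun u v => u = [:: a; b] <-> v = [:: a; b]) (g := id)).
- by [].
- by move=> x y [].
- by move=> x y z [h1 h1'] [h2 h2']; split=> [/h1/h2|/h2'/h1'].
move=> _ _ [c d s t hst] /=; split=> E.
- case: c E => [|c0 [|c1 c]] /= E; [|by case: E|by case: E => _ _; case: c].
  by case: E => E1 E2 E3; subst; rewrite hst in nab.
- case: c E => [|c0 [|c1 c]] /= E; [|by case: E|by case: E => _ _; case: c].
  by case: E => E1 E2 E3; subst; rewrite hst in nba.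
Qed.

Lemma gcomm_comm a b : gcomm a b -> a != b -> comm a b.
Proof.
move=> h nab; apply/negPn/negP => nc; move: h.
rewrite /gcomm /Defs.wgen !wmulE => /wpiP /nf_weq.
have ab_red x y : x != y -> reduced [:: x; y].
  by rewrite /= eq_sym => /negbTE ->; case: (comm _ _).
rewrite !cat1s !nf_reduced ?ab_red // 1?eq_sym // => /(ceq_noncomm_pair nc) [E _].
by rewrite E eqxx in nab.
Qed.

Lemma wgen_inj a b : wgen a = wgen b -> a = b.
Proof.
rewrite /Defs.wgen => /wpiP /nf_weq; rewrite !nf_reduced //= => /ceq_perm.
by move/perm_mem/(_ a); rewrite !inE eqxx => /esym/eqP.
Qed.

Definition commg s x := wmul (wgen s) x = wmul x (wgen s).

Lemma commg_inv s x : commg s x -> commg s (winv x).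
Proof. by rewrite /commg => /(congr1 winv); rewrite !winvM winv_gen => ->. Qed.

Lemma commg_passes s a : all (passes s) a -> commg s (wpi a).
Proof.
move=> h; rewrite /commg /Defs.wgen !wmulE; apply/wpiP/ceq_weq/rst_sym.
by have := @ceq_passes s a [::] h; rewrite cats0.
Qed.

Lemma extract_lmul s r r' : extract s r = Some r' -> wmul (wgen s) (wpi r) = wpi r'.
Proof.
move/extract_ceq_cons/ceq_weq/wpiP => ->.
by rewrite -cat1s -wmulE wgenK.
Qed.

Lemma ldesc2_comm s t x : ldesc s x -> ldesc t x -> s != t ->
  comm s t /\ ldesc t (wmul (wgen s) x).
Proof.
rewrite -(wpi_nfw x); move: (nfw x) (nfw_reduced x) => r hr.
rewrite [ldesc s _]ldesc_reduced // [ldesc t (wpi r)]ldesc_reduced //.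
case Es: (extract s r) => [rs|] // _; case Et: (extract t r) => [rt|] // _ nst.
rewrite (extract_lmul Es) ldesc_reduced; last by case: (reduced_extract hr Es).
move: (Et) => /extractP [a [b [Er Ert ha]]]; subst r rt.
move: Es; rewrite extract_cat /= eq_sym (negbTE nst).
case hs: (all (passes s) a).
  case: ifP => cts //; case Eb: (extract s b) => [b'|] //= [<-].
  by rewrite extract_cat ha /= eqxx comm_sym.
case Ea: (extract s a) => [a'|] //= [<-].
have /(allP ha) /andP [_ cst] := extract_mem Ea.
move: Ea => /extractP [a1 [a2 [Ea Ea' _]]]; subst a a'.
move: ha; rewrite !all_cat /= => /and3P [ha1 _ ha2].
by rewrite extract_cat all_cat ha1 ha2 /= eqxx.
Qed.

Lemma rdesc2_comm s t x : rdesc s x -> rdesc t x -> s != t ->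
  comm s t /\ rdesc t (wmul x (wgen s)).
Proof. by rewrite !rdesc_inv => h1 h2 /(ldesc2_comm h1 h2) []; rewrite winvM winv_gen. Qed.

Lemma ldesc_mul_reduced s a y : reduced a -> wlen (wmul (wpi a) y) = size a + wlen y ->
  ldesc s (wmul (wpi a) y) -> extract s a = None -> all (passes s) a /\ ldesc s y.
Proof.
move=> ha; rewrite -(wpi_nfw y); move: (nfw y) (nfw_reduced y) => b hb.
rewrite wmulE wlen_nf wlen_reduced // -size_cat => /reduced_size_nf hab.
rewrite !ldesc_reduced // extract_cat => + hx; rewrite hx.
by case: ifP => //; case: (extract s b).
Qed.

Lemma ldesc_mul_split s x y : wlen (wmul x y) = wlen x + wlen y ->
  ldesc s (wmul x y) -> ~~ ldesc s x -> commg s x /\ ldesc s y.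
Proof.
move=> hl hd; rewrite -{1}(wpi_nfw x) ldesc_reduced ?nfw_reduced // negbK => /eqP hx.
have hl' : wlen (wmul (wpi (nfw x)) y) = size (nfw x) + wlen y by rewrite wpi_nfw size_nfw.
have hd' : ldesc s (wmul (wpi (nfw x)) y) by rewrite wpi_nfw.
have [/commg_passes] := ldesc_mul_reduced (nfw_reduced x) hl' hd' hx.
by rewrite wpi_nfw.
Qed.

Lemma rdesc_mul_split t x y : wlen (wmul x y) = wlen x + wlen y ->
  rdesc t (wmul x y) -> ~~ rdesc t y -> commg t y /\ rdesc t x.
Proof.
rewrite !rdesc_inv winvM => hl hd hn.
have hl' : wlen (wmul (winv y) (winv x)) = wlen (winv y) + wlen (winv x).
  by rewrite -winvM !wlen_inv hl addnC.
have [/commg_inv] := ldesc_mul_split hl' hd hn.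
by rewrite winvK.
Qed.

Lemma reduced_cat a b : reduced a -> reduced b ->
  (forall c t a', a = c ++ t :: a' -> all (passes t) a' -> extract t b = None) ->
  reduced (a ++ b).
Proof.
elim: a => [|x a IH] //= /andP [/eqP hx ha] hb H.
rewrite IH //; last by move=> c t a' E; apply: (H (x :: c)); rewrite E.
rewrite extract_cat; case: ifP => hall; last by rewrite hx.
by rewrite (H [::] x a).
Qed.

Lemma wlen_mul_nodesc x y : (forall t, rdesc t x -> ldesc t y -> False) ->
  wlen (wmul x y) = wlen x + wlen y.
Proof.
move=> H; suff hr : reduced (nfw x ++ nfw y).
  by rewrite -{1}(wpi_nfw x) -{1}(wpi_nfw y) wmulE (wlen_reduced hr) size_cat !size_nfw.
apply: reduced_cat; rewrite ?nfw_reduced // => c t a' E hall.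
apply/eqP/negPn/negP => ht; apply: (H t); last by rewrite -(wpi_nfw y) ldesc_reduced ?nfw_reduced.
rewrite /rdesc; have -> : wmul x (wgen t) = wpi (c ++ a').
  rewrite -(wpi_nfw x) E /Defs.wgen wmulE; apply/wpiP; rewrite -catA /=.
  apply: rst_trans (weq_catl c (ceq_weq (rst_sym _ _ _ _ (@ceq_passes t a' [:: t] hall)))) _.
  by apply: weq_catl; rewrite -[X in weq _ X]cats0; apply/weq_catl/weq_sq.
rewrite -[wlen x]size_nfw E; apply: leq_ltn_trans (wlen_le_size _) _.
by rewrite !size_cat /= addnS.
Qed.

(** * Cliques *)

Local Notation VG := (@Defs.VG S comm).
Local Notation clique := (@Defs.clique S comm).

Lemma reduced_uniq_comm (l : seq S) : uniq l ->
  {in l &, forall x y, x != y -> comm x y} -> reduced l.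
Proof.
elim: l => [|x l IH] //= /andP [nxl ul] H.
rewrite IH //; last by move=> a b ha hb; apply: H; rewrite inE ?ha ?hb orbT.
suff hall : all (passes x) l by rewrite -[l]cats0 extract_cat hall.
apply/allP => y hy; have nyx : y != x by apply: contraNneq nxl => <-.
by rewrite /passes nyx H // inE ?eqxx ?hy ?orbT.
Qed.

Lemma reduced_enum G : clique G -> reduced (enum G).
Proof.
move=> hG; apply: reduced_uniq_comm; first exact: enum_uniq.
by move=> x y; rewrite !mem_enum; apply: hG.
Qed.

Lemma wlen_VG G : clique G -> wlen (VG G) = #|G|.
Proof. by move=> hG; rewrite /Defs.VG wlen_reduced ?reduced_enum // cardE. Qed.

Lemma clique_subset (G H : {set S}) : clique G -> H \subset G -> clique H.
Proof. by move=> hG /subsetP hs a b ha hb; apply: hG; apply: hs. Qed.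

Lemma enum_setD1 (G : {set S}) t : clique G -> t \in G ->
  exists a b, [/\ enum G = a ++ t :: b, enum (G :\ t) = a ++ b & all (passes t) a].
Proof.
move=> hG tG; set l := enum G; have tl : t \in l by rewrite mem_enum.
exists (take (index t l) l), (drop (index t l).+1 l).
have El : l = take (index t l) l ++ t :: drop (index t l).+1 l.
  by rewrite -{2}[t](nth_index t tl) -drop_nth ?index_mem // cat_take_drop.
have := enum_uniq (mem G); rewrite -/l {1}El cat_uniq /= => /and4P [_ /norP [ntl _] ntr _].
split=> //.
- have -> : enum (G :\ t) = filter (predC1 t) l.
    by rewrite /l /enum_mem -filter_predI; apply: eq_filter => x; rewrite /= in_setD1.
  rewrite {1}El filter_cat /= eqxx /=; congr (_ ++ _); apply/all_filterP/allP => x hx /=.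
    by apply: contraTneq hx => ->.
  by apply: contraTneq hx => ->.
apply/allP => x hx; have nxt : x != t by apply: contraTneq hx => ->.
by rewrite /passes nxt hG // -mem_enum -/l El mem_cat ?hx ?inE ?eqxx ?orbT.
Qed.

Lemma VG_setD1 G t : clique G -> t \in G -> VG G = wmul (wgen t) (VG (G :\ t)).
Proof.
move=> hG tG; have [a [b [E1 E2 ha]]] := enum_setD1 hG tG.
rewrite /Defs.VG E1 E2 /Defs.wgen wmulE.
exact/wpiP/ceq_weq/ceq_passes.
Qed.

Lemma VG_set0 : VG set0 = wone.
Proof. by rewrite /Defs.VG enum_set0. Qed.

Lemma ldesc_VG G s : clique G -> ldesc s (VG G) = (s \in G).
Proof.
move=> hG; rewrite /Defs.VG ldesc_reduced ?reduced_enum //.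
case E: (extract s _) => [r|] /=; first by rewrite -mem_enum (extract_mem E).
apply/esym/negbTE/negP => /(enum_setD1 hG) [a [b [E1 _ ha]]].
by move: E; rewrite E1 extract_cat ha /= eqxx.
Qed.

Lemma commg_wpi s l : (forall t, t \in l -> gcomm s t) -> commg s (wpi l).
Proof.
elim: l => [|x l IH] H; first by rewrite /commg wmul1w wmulw1.
rewrite /commg -cat1s -wmulE -/(wgen x).
rewrite wmulA (H x (mem_head _ _)) -wmulA IH ?wmulA //.
by move=> t ht; apply: H; rewrite inE ht orbT.
Qed.

Lemma commg_VG s (G : {set S}) : (forall t, t \in G -> gcomm s t) -> commg s (VG G).
Proof. by move=> H; apply: commg_wpi => t; rewrite mem_enum; apply: H. Qed.

Lemma ldesc_VG_prefix G x : clique G ->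
  wlen (wmul (winv (VG G)) x) + wlen (VG G) = wlen x -> forall t, t \in G -> ldesc t x.
Proof.
move=> hG hl t tG; rewrite (wlen_VG hG) in hl.
have hGt : clique (G :\ t) by apply: clique_subset hG (subsetDl _ _).
rewrite /ldesc -{1}(wmulKV (VG G) x); set z := wmul (winv (VG G)) x in hl *.
rewrite (VG_setD1 hG tG) -wmulA wgenK.
apply: leq_ltn_trans (wlen_mul_le _ _) _.
by rewrite (wlen_VG hGt) -hl (cardsD1 t G) tG add1n addnS ltnS addnC.
Qed.

Lemma VG_prefix_ldesc G x : clique G -> (forall t, t \in G -> ldesc t x) ->
  wlen (wmul (winv (VG G)) x) + wlen (VG G) = wlen x.
Proof.
have [n] := ubnP #|G|; elim: n G x => // n IH G x ltGn hG H.
case: (set_0Vmem G) => [->|[t tG]].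
  by rewrite VG_set0 /wone winvE wmul1w wlen_one addn0.
have hGt : clique (G :\ t) by apply: clique_subset hG (subsetDl _ _).
have ltGtn : #|G :\ t| < n by move: ltGn; rewrite (cardsD1 t G) tG.
have Ht u : u \in G :\ t -> ldesc u (wmul (wgen t) x).
  case/setD1P => nut uG; have ntu : t != u by rewrite eq_sym.
  by case: (ldesc2_comm (H t tG) (H u uG) ntu).
have := IH _ _ ltGtn hGt Ht; rewrite (wlen_VG hGt) => hI.
rewrite (VG_setD1 hG tG) winvM winv_gen -wmulA -(VG_setD1 hG tG) (wlen_VG hG).
by rewrite (cardsD1 t G) tG add1n addnS hI -(wlen_ldesc (H t tG)).
Qed.

Lemma VG_prefixE G x : clique G ->
  (wlen (wmul (winv (VG G)) x) + wlen (VG G) == wlen x) = [forall t in G, ldesc t x].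
Proof.
move=> hG; apply/eqP/forall_inP; first exact: ldesc_VG_prefix.
exact: VG_prefix_ldesc.
Qed.

(** * The index set A_w *)

Local Notation inA := (@Defs.inA S comm).

Definition commutes_past s w1 (G : {set S}) :=
  commg s w1 /\ (forall t, t \in G -> gcomm s t).

Lemma wlen_mul3_le a b c : wlen (wmul a (wmul b c)) <= wlen a + wlen b + wlen c.
Proof. by apply: leq_trans (wlen_mul_le _ _) _; rewrite -addnA leq_add2l wlen_mul_le. Qed.

Lemma inA_wlen w w1 G w2 : inA w w1 G w2 -> wlen w1 <= wlen w /\ wlen w2 <= wlen w.
Proof. by case=> _ _ -> _; split; lia. Qed.

Lemma rdesc_wgen t s : rdesc t (wgen s) -> t = s.
Proof.
rewrite /rdesc wlen_gen ltnS leqn0 => /eqP /wlen_eq0 h.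
by apply: wgen_inj; rewrite -[wgen t]wmul1w -(wgen_sq s) -wmulA h wmulw1.
Qed.

Lemma clique_setU1 s G : clique G -> (forall t, t \in G -> gcomm s t) -> clique (s |: G).
Proof.
move=> hG hc a b; rewrite !in_setU1 => /predU1P [->|ha] /predU1P [->|hb] nab.
- by rewrite eqxx in nab.
- exact: gcomm_comm (hc b hb) nab.
- by rewrite comm_sym; apply: gcomm_comm (hc a ha) _; rewrite eq_sym.
- exact: hG.
Qed.

Section LeftExtension.
Variables (s : S) (w0 : W).
Hypothesis hw : wlen (wmul (wgen s) w0) = (wlen w0).+1.

Lemma inA_nldesc w1 G w2 : inA w0 w1 G w2 -> ~~ ldesc s w1.
Proof.
move=> [_ E hl _]; apply/negP => /wlen_ldesc d.
have := wlen_mul3_le (wmul (wgen s) w1) (VG G) w2.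
rewrite -wmulA -E hw; lia.
Qed.

Lemma inA_notin w1 G w2 : inA w0 w1 G w2 -> commutes_past s w1 G -> s \notin G.
Proof.
move=> [hG E hl _] [hc _]; apply/negP => sG.
have hGs : clique (G :\ s) by apply: clique_subset hG (subsetDl _ _).
have e1 : wmul (wgen s) w0 = wmul w1 (wmul (VG (G :\ s)) w2).
  by rewrite E (VG_setD1 hG sG) wmulA hc -!wmulA wgenK.
have := wlen_mul3_le w1 (VG (G :\ s)) w2.
rewrite -e1 hw (wlen_VG hGs); move: hl; rewrite (wlen_VG hG) (cardsD1 s G) sG.
lia.
Qed.

Lemma inA_lift_prefix w1 G w2 : inA w0 w1 G w2 -> ~ commutes_past s w1 G ->
  inA (wmul (wgen s) w0) (wmul (wgen s) w1) G w2 /\ ldesc s (wmul (wgen s) w1).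
Proof.
move=> hA ncB; have /wlen_nldesc hs1 := inA_nldesc hA.
case: hA => hG E hl h3.
split; last by rewrite /ldesc wgenK hs1.
split=> //; first by rewrite E wmulA.
  by rewrite hw hl hs1; lia.
move=> t ht; case: (boolP (rdesc t (wmul (wgen s) w1))) => [d|]; last exact: wlen_nrdesc_lt.
have nd1 : ~~ rdesc t w1 by rewrite /rdesc -leqNgt; apply/ltnW/h3.
have hl2 : wlen (wmul (wgen s) w1) = wlen (wgen s) + wlen w1 by rewrite wlen_gen hs1.
have [hc /rdesc_wgen ets] := rdesc_mul_split hl2 d nd1; subst t.
by case: ncB; split=> // t /ht /gcomm_sym.
Qed.

Lemma inA_unlift_prefix v1 H v2 : inA (wmul (wgen s) w0) v1 H v2 -> ldesc s v1 ->
  inA w0 (wmul (wgen s) v1) H v2 /\ ~ commutes_past s (wmul (wgen s) v1) H.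
Proof.
move=> [hH E hl h3] /wlen_ldesc h1; split.
  split=> //.
  - by rewrite -(wgenK s w0) E wmulA.
  - by move: hl; rewrite hw h1; lia.
  move=> t ht; case: (boolP (rdesc t (wmul (wgen s) v1))) => [/wlen_rdesc h2|];
    last exact: wlen_nrdesc_lt.
  have := h3 t ht; have := wlen_mul_le (wgen s) (wmul (wmul (wgen s) v1) (wgen t)).
  by rewrite !wmulA wgen_sq wmul1w wlen_gen; lia.
move=> [hc hcs]; have := h3 s hcs.
have -> : wmul v1 (wgen s) = wmul (wgen s) v1.
  by rewrite -{1}(wgenK s v1) hc -wmulA wgen_sq wmulw1.
by lia.
Qed.

Lemma inA_add_clique w1 G w2 : inA w0 w1 G w2 -> commutes_past s w1 G ->
  [/\ inA (wmul (wgen s) w0) w1 (s |: G) w2, ~~ ldesc s w1 & s \notin G].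
Proof.
move=> hA hcB; have nd := inA_nldesc hA; have nsG := inA_notin hA hcB.
case: hcB => hc hcs; case: hA => hG E hl h3.
have hG' := clique_setU1 hG hcs.
have hV : VG (s |: G) = wmul (wgen s) (VG G) by rewrite (VG_setD1 hG' (setU11 _ _)) setU1K.
split=> //; split=> //.
- by rewrite E hV (wmulA (wgen s) w1) hc -!wmulA.
- by rewrite hw hl (wlen_VG hG') (wlen_VG hG) cardsU1 nsG; lia.
- by move=> t ht; apply: h3 => u hu; apply: ht; rewrite in_setU1 hu orbT.
Qed.

Lemma inA_del_clique v1 H v2 : inA (wmul (wgen s) w0) v1 H v2 -> ~~ ldesc s v1 ->
  s \in H -> inA w0 v1 (H :\ s) v2 /\ commutes_past s v1 (H :\ s).
Proof.
move=> [hH E hl h3] nd sH.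
have hHs : clique (H :\ s) by apply: clique_subset hH (subsetDl _ _).
have hl' : wlen (wmul v1 (wmul (VG H) v2)) = wlen v1 + wlen (wmul (VG H) v2).
  by have := wlen_mul_le (VG H) v2; have := wlen_mul_le v1 (wmul (VG H) v2); rewrite -E; lia.
have dw : ldesc s (wmul v1 (wmul (VG H) v2)) by rewrite -E /ldesc wgenK hw.
have [hc _] := ldesc_mul_split hl' dw nd.
have hcs : commutes_past s v1 (H :\ s).
  by split=> // t /setD1P [nts tH]; apply/comm_gcomm/hH; rewrite // eq_sym.
split=> //; split=> //.
- by rewrite -(wgenK s w0) E (VG_setD1 hH sH) wmulA hc -!wmulA wgenK.
- by move: hl; rewrite hw (wlen_VG hH) (wlen_VG hHs) (cardsD1 s H) sH; lia.
move=> t ht; case: (boolP (rdesc t v1)) => [dR|]; last exact: wlen_nrdesc_lt.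
apply: h3 => u uH; case: (eqVneq u s) => [->|nus]; last by apply: ht; rewrite in_setD1 nus.
case: (eqVneq t s) => [->//|nts]; apply/gcomm_sym/comm_gcomm.
have /wlen_nldesc hs1 := nd.
have d1 : rdesc t (wmul (wgen s) v1).
  have := wlen_rdesc dR; have := wlen_mul_le (wgen s) (wmul v1 (wgen t)).
  by rewrite /rdesc hs1 -wmulA wlen_gen; lia.
have d2 : rdesc s (wmul (wgen s) v1) by rewrite /rdesc hc -wmulA wgen_sq wmulw1 -hc hs1.
by case: (rdesc2_comm d2 d1 _); rewrite // eq_sym.
Qed.

Lemma inA_lift_suffix w1 G w2 : inA w0 w1 G w2 -> commutes_past s w1 G ->
  [/\ inA (wmul (wgen s) w0) w1 G (wmul (wgen s) w2), ~~ ldesc s w1 & s \notin G].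
Proof.
move=> hA hcB; have nd := inA_nldesc hA; have nsG := inA_notin hA hcB.
case: hcB => hc /commg_VG gV; case: hA => hG E hl h3.
have E' : wmul (wgen s) w0 = wmul w1 (wmul (VG G) (wmul (wgen s) w2)).
  by rewrite E (wmulA (wgen s) w1) hc -wmulA (wmulA (wgen s) (VG G)) gV -wmulA.
split=> //; split=> //.
have := wlen_mul3_le w1 (VG G) (wmul (wgen s) w2); rewrite -E'.
by have := wlen_mul_le (wgen s) w2; rewrite wlen_gen; lia.
Qed.

Lemma inA_unlift_suffix v1 H v2 : inA (wmul (wgen s) w0) v1 H v2 -> ~~ ldesc s v1 ->
  s \notin H -> inA w0 v1 H (wmul (wgen s) v2) /\ commutes_past s v1 H.
Proof.
move=> [hH E hl h3] nd nsH.
have hVv2 : wlen (wmul (VG H) v2) = wlen (VG H) + wlen v2.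
  by have := wlen_mul_le (VG H) v2; have := wlen_mul_le v1 (wmul (VG H) v2); rewrite -E; lia.
have hl' : wlen (wmul v1 (wmul (VG H) v2)) = wlen v1 + wlen (wmul (VG H) v2) by rewrite -E; lia.
have dw : ldesc s (wmul v1 (wmul (VG H) v2)) by rewrite -E /ldesc wgenK hw.
have [hc dV] := ldesc_mul_split hl' dw nd.
have hH0 : extract s (enum H) = None.
  apply/eqP; move: (ldesc_VG s hH).
  by rewrite (negbTE nsH) /Defs.VG ldesc_reduced ?reduced_enum // => /negbFE.
have hlV : wlen (wmul (wpi (enum H)) v2) = size (enum H) + wlen v2.
  by rewrite -cardE -(wlen_VG hH).
have [hall dv2] := ldesc_mul_reduced (reduced_enum hH) hlV dV hH0.
have hcs : forall t, t \in H -> gcomm s t.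
  move=> t tH; apply/comm_gcomm; rewrite comm_sym.
  by move/allP: hall => /(_ t); rewrite mem_enum tH => /(_ isT) /andP [].
split; last by [].
split=> //.
- rewrite -(wgenK s w0) E (wmulA (wgen s) v1) hc -wmulA (wmulA (wgen s) (VG H)).
  by rewrite (commg_VG hcs) -wmulA.
- by have := wlen_ldesc dv2; move: hl; rewrite hw; lia.
Qed.

End LeftExtension.

Lemma ldesc_lmul_clique s (G : {set S}) x : (forall t, t \in G -> gcomm s t) ->
  s \notin G -> (forall t, t \in G -> ldesc t x) ->
  forall t, t \in G -> ldesc t (wmul (wgen s) x).
Proof.
move=> hcs nsG H t tG; have dt := H t tG.
have nst : s != t by apply: contraNneq nsG => ->.
case: (boolP (ldesc s x)) => [ds|/wlen_nldesc h1]; first by case: (ldesc2_comm ds dt nst).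
rewrite /ldesc wmulA -(hcs t tG) -wmulA h1.
have := wlen_ldesc dt; have := wlen_mul_le (wgen s) (wmul (wgen t) x).
by rewrite wlen_gen; lia.
Qed.

Lemma forall_ldesc_lmul s (G : {set S}) x : (forall t, t \in G -> gcomm s t) ->
  s \notin G -> [forall t in G, ldesc t (wmul (wgen s) x)] = [forall t in G, ldesc t x].
Proof.
move=> hcs nsG; apply/forall_inP/forall_inP; last exact: ldesc_lmul_clique.
by move/(ldesc_lmul_clique hcs nsG); rewrite wgenK.
Qed.

Lemma wlen_mul_prefix w1 (G : {set S}) z :
  (forall s, (forall t, t \in G -> wmul (wgen s) (wgen t) = wmul (wgen t) (wgen s)) ->
     wlen w1 < wlen (wmul w1 (wgen s))) ->
  (forall t, t \in G -> ldesc t z) -> wlen (wmul w1 z) = wlen w1 + wlen z.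
Proof.
move=> h3 hz; apply: wlen_mul_nodesc => t dR dt.
suff : wlen w1 < wlen (wmul w1 (wgen t)) by move: dR; rewrite /rdesc; lia.
apply: h3 => u uG; case: (eqVneq t u) => [->//|ntu].
by apply: comm_gcomm; case: (ldesc2_comm dt (hz u uG) ntu).
Qed.

Lemma mem_wball N x : (x \in wball comm N) = (wlen x <= N).
Proof.
rewrite /wball mem_undup; apply/flattenP/idP.
  case=> l /mapP [k]; rewrite mem_iota add0n ltnS => hk -> /mapP [t _ ->].
  by apply: leq_trans (wlen_le_size _) _; rewrite size_tuple.
move=> hx; exists [seq wpi (tval t) | t <- enum {: (wlen x).-tuple S}].
  by apply/mapP; exists (wlen x); rewrite // mem_iota add0n ltnS.
apply/mapP; exists (@Tuple (wlen x) S (nfw x) (introT eqP (size_nfw x))).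
  by rewrite mem_enum.
by rewrite /= wpi_nfw.
Qed.

Definition triple := (W * {set S} * W)%type.

Definition triples N : seq triple :=
  [seq (a, w2) | a <- [seq (w1, G) | w1 <- wball comm N, G <- index_enum {set S}],
                 w2 <- wball comm N].

Lemma mem_triples N (tau : triple) :
  (tau \in triples N) = (wlen tau.1.1 <= N) && (wlen tau.2 <= N).
Proof.
rewrite -!mem_wball; case: tau => [[w1 G] w2] /=; apply/allpairsP/andP.
  case=> [[a b]] /= [ha hb [Ea Eb]]; subst.
  by move/allpairsP: ha => [[c d]] /= [hc _ [E1 E2]]; subst.
case=> h1 h2; exists ((w1, G), w2); split=> //.
by apply/allpairsP; exists (w1, G); split=> //; apply: mem_index_enum.
Qed.

Lemma uniq_triples N : uniq (triples N).
Proof.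
apply: allpairs_uniq; rewrite ?undup_uniq //; last by move=> [a b] [c d].
apply: allpairs_uniq; rewrite ?undup_uniq ?index_enum_uniq //.
by move=> [a b] [c d].
Qed.

Definition inAb w (tau : triple) := `[< inA w tau.1.1 tau.1.2 tau.2 >].

Lemma inA_triples N w (tau : triple) : inAb w tau -> wlen w <= N -> tau \in triples N.
Proof.
move=> /asboolP /inA_wlen [h1 h2] hN.
by rewrite mem_triples (leq_trans h1 hN) (leq_trans h2 hN).
Qed.

Lemma inA_oneE w1 G w2 : inA wone w1 G w2 <-> (w1, G, w2) = (wone, set0, wone).
Proof.
split.
  case=> hG E; rewrite wlen_one (wlen_VG hG) => hl _.
  have /wlen_eq0 -> : wlen w1 = 0 by lia.
  have /wlen_eq0 -> : wlen w2 = 0 by lia.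
  have : #|G| == 0 by apply/eqP; lia.
  by rewrite cards_eq0 => /eqP ->.
case=> -> -> ->; split.
- by move=> a b; rewrite in_set0.
- by rewrite VG_set0 !wmul1w.
- by rewrite VG_set0 wlen_one.
- by move=> s0 _; rewrite wmul1w wlen_one wlen_gen.
Qed.

Definition commutes_pastb s (tau : triple) := `[< commutes_past s tau.1.1 tau.1.2 >].
Definition lift_prefix s (tau : triple) : triple := (wmul (wgen s) tau.1.1, tau.1.2, tau.2).
Definition add_clique s (tau : triple) : triple := (tau.1.1, s |: tau.1.2, tau.2).
Definition del_clique s (tau : triple) : triple := (tau.1.1, tau.1.2 :\ s, tau.2).
Definition lift_suffix s (tau : triple) : triple := (tau.1.1, tau.1.2, wmul (wgen s) tau.2).

Section Sums.
Variables (R : realType) (p : R) (f : vec comm R).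
Local Open Scope ring_scope.

Definition term (tau : triple) (y : W) : R :=
  p ^+ #|tau.1.2| * T1 tau.1.1 (Pu (VG tau.1.2) (T1 tau.2 f)) y.

Lemma termE w1 G w2 y : clique G -> term (w1, G, w2) y =
  p ^+ #|G| * (if [forall t in G, ldesc t (wmul (winv w1) y)]
               then f (wmul (winv w2) (wmul (winv w1) y)) else 0).
Proof. by move=> hG; rewrite /term /T1 /Pu /= VG_prefixE. Qed.

Lemma term_lmul s w1 G w2 y :
  term (w1, G, w2) (wmul (wgen s) y) = term (wmul (wgen s) w1, G, w2) y.
Proof. by rewrite /term /T1 /= winvM winv_gen -wmulA. Qed.

Section LeftExtension.
Variables (s : S) (w0 : W).
Hypothesis hw : wlen (wmul (wgen s) w0) = (wlen w0).+1.

Lemma term_ldesc_vanish w1 G w2 y : inA w0 w1 G w2 -> ~ commutes_past s w1 G ->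
  (if ldesc s y then p * term (w1, G, w2) y else 0) = 0.
Proof.
move=> hA ncB; case: ifP => // dy; have nd := inA_nldesc hw hA.
case: hA => hG _ _ h3; rewrite termE //; case: forall_inP => [hz|]; last by rewrite !mulr0.
case: ncB; move: dy hz; rewrite -{1}(wmulKV w1 y); set z := wmul (winv w1) y => dy hz.
have [hc hdz] := ldesc_mul_split (wlen_mul_prefix h3 hz) dy nd.
split=> // t tG; case: (eqVneq s t) => [->//|nst].
by apply: comm_gcomm; case: (ldesc2_comm hdz (hz t tG) nst).
Qed.

Lemma term_lmul_suffix w1 G w2 y : inA w0 w1 G w2 -> commutes_past s w1 G ->
  term (w1, G, w2) (wmul (wgen s) y) = term (w1, G, wmul (wgen s) w2) y.
Proof.
move=> hA hcB; have nsG := inA_notin hw hA hcB.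
case: hcB => hc hcs; case: hA => hG _ _ _.
rewrite !termE // wmulA -(commg_inv hc) -wmulA forall_ldesc_lmul //.
by rewrite winvM winv_gen -wmulA.
Qed.

Lemma term_ldesc_clique w1 G w2 y : inA w0 w1 G w2 -> commutes_past s w1 G ->
  (if ldesc s y then p * term (w1, G, w2) y else 0) = term (w1, s |: G, w2) y.
Proof.
move=> hA hcB; have nsG := inA_notin hw hA hcB; have nd := inA_nldesc hw hA.
case: hcB => hc hcs; case: hA => hG _ _ h3.
have hG' := clique_setU1 hG hcs.
rewrite !termE // cardsU1 nsG add1n exprS.
have -> : [forall t in s |: G, ldesc t (wmul (winv w1) y)] =
    ldesc s (wmul (winv w1) y) && [forall t in G, ldesc t (wmul (winv w1) y)].
  apply/forall_inP/andP => [H|[hs /forall_inP H] t].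
    by split; [apply: H; rewrite setU11 | apply/forall_inP => t ht; apply: H; rewrite setU1r].
  by rewrite in_setU1 => /predU1P [->|/H].
set z := wmul (winv w1) y.
case: forall_inP => [hz|_]; last by rewrite andbF !mulr0; case: ifP.
have ey : y = wmul w1 z by rewrite /z wmulKV.
have hl2 := wlen_mul_prefix h3 hz.
have -> : ldesc s y = ldesc s z.
  apply/idP/idP => d; first by rewrite ey in d; case: (ldesc_mul_split hl2 d nd).
  rewrite ey /ldesc wmulA hc -wmulA.
  by have := wlen_mul_le w1 (wmul (wgen s) z); have := wlen_ldesc d; lia.
by rewrite andbT; case: (ldesc s z); rewrite ?mulrA // !mulr0.
Qed.

Variables (N : nat) (y : W).
Hypothesis hN : (wlen (wmul (wgen s) w0) <= N)%N.

Let hN0 : (wlen w0 <= N)%N.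
Proof. by move: hN; rewrite hw; lia. Qed.

Lemma sum_lift_prefix :
  \sum_(tau <- triples N | inAb w0 tau && ~~ commutes_pastb s tau) term (lift_prefix s tau) y =
  \sum_(tau <- triples N | inAb (wmul (wgen s) w0) tau && ldesc s tau.1.1) term tau y.
Proof.
apply: (big_seq_bij (psi := lift_prefix s)); rewrite ?uniq_triples //.
  move=> [[w1 G] w2] _ /andP [/asboolP hA /asboolPn ncB].
  have [hA' d] := inA_lift_prefix hw hA ncB.
  have hA'b : inAb (wmul (wgen s) w0) (lift_prefix s (w1, G, w2)) by apply/asboolP.
  by rewrite (inA_triples hA'b hN) hA'b d /lift_prefix /= wgenK.
move=> [[v1 H] v2] _ /andP [/asboolP hA d].
have [hA' ncB] := inA_unlift_prefix hw hA d.
have hA'b : inAb w0 (lift_prefix s (v1, H, v2)) by apply/asboolP.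
by rewrite (inA_triples hA'b hN0) hA'b /lift_prefix /= wgenK; split=> //; apply/asboolPn.
Qed.

Lemma sum_add_clique :
  \sum_(tau <- triples N | inAb w0 tau && commutes_pastb s tau) term (add_clique s tau) y =
  \sum_(tau <- triples N | inAb (wmul (wgen s) w0) tau && ~~ ldesc s tau.1.1 && (s \in tau.1.2))
    term tau y.
Proof.
apply: (big_seq_bij (psi := del_clique s)); rewrite ?uniq_triples //.
  move=> [[w1 G] w2] _ /andP [/asboolP hA /asboolP hcB].
  have [hA' d nsG] := inA_add_clique hw hA hcB.
  have hA'b : inAb (wmul (wgen s) w0) (add_clique s (w1, G, w2)) by apply/asboolP.
  by rewrite (inA_triples hA'b hN) hA'b d /add_clique /del_clique /= setU11 setU1K.
move=> [[v1 H] v2] _ /andP [/andP [/asboolP hA d] sH].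
have [hA' hcB] := inA_del_clique hw hA d sH.
have hA'b : inAb w0 (del_clique s (v1, H, v2)) by apply/asboolP.
rewrite (inA_triples hA'b hN0) hA'b /add_clique /del_clique /= setD1K //.
by split=> //; apply/asboolP.
Qed.

Lemma sum_lift_suffix :
  \sum_(tau <- triples N | inAb w0 tau && commutes_pastb s tau) term (lift_suffix s tau) y =
  \sum_(tau <- triples N | inAb (wmul (wgen s) w0) tau && ~~ ldesc s tau.1.1 && (s \notin tau.1.2))
    term tau y.
Proof.
apply: (big_seq_bij (psi := lift_suffix s)); rewrite ?uniq_triples //.
  move=> [[w1 G] w2] _ /andP [/asboolP hA /asboolP hcB].
  have [hA' d nsG] := inA_lift_suffix hw hA hcB.
  have hA'b : inAb (wmul (wgen s) w0) (lift_suffix s (w1, G, w2)) by apply/asboolP.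
  by rewrite (inA_triples hA'b hN) hA'b d nsG /lift_suffix /= wgenK.
move=> [[v1 H] v2] _ /andP [/andP [/asboolP hA d] sH].
have [hA' hcB] := inA_unlift_suffix hw hA d sH.
have hA'b : inAb w0 (lift_suffix s (v1, H, v2)) by apply/asboolP.
by rewrite (inA_triples hA'b hN0) hA'b /lift_suffix /= wgenK; split=> //; apply/asboolP.
Qed.

Lemma Ts_sum_inA (g : vec comm R) :
  (forall x, g x = \sum_(tau <- triples N | inAb w0 tau) term tau x) ->
  Ts p s g y = \sum_(tau <- triples N | inAb (wmul (wgen s) w0) tau) term tau y.
Proof.
move=> hg; rewrite /Ts -/(ldesc s y) !hg.
have -> : (if ldesc s y then p * \sum_(tau <- triples N | inAb w0 tau) term tau y else 0) =
    \sum_(tau <- triples N | inAb w0 tau) (if ldesc s y then p * term tau y else 0).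
  by case: (ldesc s y); [rewrite big_distrr | rewrite big1].
rewrite -big_split /= (bigID (commutes_pastb s)) /=.
rewrite (eq_bigr (fun tau => term (lift_suffix s tau) y + term (add_clique s tau) y)); last first.
  move=> [[w1 G] w2] /andP [/asboolP hA /asboolP hcB].
  by rewrite term_lmul_suffix // term_ldesc_clique.
rewrite [X in _ + X](eq_bigr (fun tau => term (lift_prefix s tau) y)); last first.
  move=> [[w1 G] w2] /andP [/asboolP hA /asboolPn ncB].
  by rewrite term_lmul (term_ldesc_vanish _ hA ncB) addr0.
rewrite big_split /= sum_lift_prefix sum_add_clique sum_lift_suffix.
rewrite [RHS](bigID (fun tau : triple => ldesc s tau.1.1)) /=.
rewrite [X in _ = _ + X](bigID (fun tau : triple => s \in tau.1.2)) /=.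
by rewrite addrC [X in _ + X]addrC.
Qed.

End LeftExtension.

Lemma sum_inA_one N y : (wlen wone <= N)%N ->
  \sum_(tau <- triples N | inAb wone tau) term tau y = f y.
Proof.
move=> hN; have hA1 : inAb wone (wone, set0, wone) by apply/asboolP/inA_oneE.
rewrite -big_filter (@eq_in_filter _ _ (pred1 (wone, set0, wone))); last first.
  by move=> [[w1 G] w2] _; apply/asboolP/eqP => /=; case: (inA_oneE w1 G w2).
rewrite filter_pred1_uniq ?uniq_triples ?(inA_triples hA1 hN) // big_seq1.
rewrite termE; last by move=> a b; rewrite in_set0.
have -> : [forall t in set0, ldesc t (wmul (winv wone) y)] by apply/forall_inP => t; rewrite in_set0.
by rewrite cards0 expr0 mul1r /wone winvE /= -/wone !wmul1w.
Qed.

Lemma Tw_reduced_word N u y : reduced u -> (size u <= N)%N ->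
  foldr (fun s g => Ts p s \o g) id u f y =
  \sum_(tau <- triples N | inAb (wpi u) tau) term tau y.
Proof.
elim: u y => [|s u IH] y hu hN; first by rewrite sum_inA_one // wlen_one.
case/andP: hu => /eqP hx hu.
have hw : wlen (wmul (wgen s) (wpi u)) = (wlen (wpi u)).+1.
  by apply: wlen_nldesc; rewrite ldesc_reduced // hx.
have -> : wpi (s :: u) = wmul (wgen s) (wpi u) by rewrite /Defs.wgen wmulE.
apply: Ts_sum_inA => //; last by move=> x; apply/IH/ltnW.
by rewrite hw wlen_reduced.
Qed.

End Sums.

End Words.

Local Open Scope ring_scope.
Unset Implicit Arguments.

Theorem lemma2p7 (S : finType) (comm : rel S) (comm_sym : symmetric comm)
    (R : realType) (q : R) (hq : 0 < q) (w : W comm) (f : vec comm R)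
    (y : W comm) :
  let p := (q - 1) / Num.sqrt q in
  Tw p w f y =
  \sum_(w1 <- wball comm (wlen w)) \sum_(G : {set S})
    \sum_(w2 <- wball comm (wlen w) | `[< inA w w1 G w2 >])
      p ^+ #|G| * T1 w1 (Pu (VG comm G) (T1 w2 f)) y.
Proof.
move=> p.
have [/eqP hpi /eqP hsz] := andP (xchooseP (redword_ex w)).
have hred : reduced comm (redword w).
  by apply: reduced_size_nf; rewrite -(wlen_nf comm_sym) /redword hpi hsz.
rewrite /Tw (@Tw_reduced_word S comm comm_sym R p f (wlen w) _ y hred); last by rewrite /redword hsz.
rewrite /redword hpi big_mkcond /triples big_allpairs big_allpairs.
apply: eq_bigr => w1 _; apply: eq_bigr => G _; rewrite [RHS]big_mkcond.
by apply: eq_bigr.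
Qed.
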